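(* Let $d\ge 1$ and let $j\in L^1(\mathbb{R}^d)$ be given by $j(x)=(2\pi)^{-d}\int_{\mathbb{R}^d}e^{ix\cdot t}\,d\rho(t)$ for a finite positive Borel measure $\rho$ on $\mathbb{R}^d$, and let $J$ be the integral operator on $L^2(\mathbb{R}^d)$ with kernel $J(x,y)=j(x-y)$. Let $\Lambda\subset\mathbb{R}^d$ be a bounded Borel set, let $\zeta_\Lambda\in\Gamma_\Lambda$ and $\xi\in\mathcal{R}_\Lambda$. Then the limit $$H_\Lambda^{(J)}(\zeta_\Lambda;\xi):=\lim_{\Delta\uparrow\mathbb{R}^d}\big[U^{(J)}(\zeta_\Lambda)+W^{(J)}(\zeta_\Lambda;\widehat\xi_{\Delta\setminus\Lambda})\big],$$ taken over bounded Borel sets $\Delta\supset\Lambda$ increasing to $\mathbb{R}^d$, exists (in $\mathbb{R}\cup\{+\infty\}$).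
   Context: Configurations: $\mathcal{N}$ is the space of locally finite integer-valued Radon measures on $\mathbb{R}^d$; $\Gamma\subset\mathcal{N}$ is the set of simple ones, identified with locally finite subsets of $\mathbb{R}^d$. For $\Lambda\subset\mathbb{R}^d$, $\xi_\Lambda=\xi\cap\Lambda$ is the restriction, and $\Gamma_\Lambda$ is the set of simple configurations supported in $\Lambda$ (finite when $\Lambda$ is bounded). For a finite tuple or configuration $\underline x_n=(x_1,\dots,x_n)$, $J(\underline x_n,\underline x_n)$ denotes the matrix $(j(x_i-x_k))_{1\le i,k\le n}$, which is positive semidefinite. Potential: $U^{(J)}(x_1,\dots,x_n):=-\log\det(j(x_i-x_k))_{1\le i,k\le n}$, with $-\log 0:=+\infty$ and $U^{(J)}(\emptyset)=0$. For disjoint finite configurations $\xi_1,\xi_2$, the mutual energy is $W^{(J)}(\xi_1;\xi_2):=U^{(J)}(\xi_1\cup\xi_2)-U^{(J)}(\xi_1)-U^{(J)}(\xi_2)$ if $U^{(J)}(\xi_1\cup\xi_2)<\infty$. In that case $U^{(J)}(\xi_1)$ and $U^{(J)}(\xi_2)$ are finite by Fischer's inequality. Otherwise $W^{(J)}(\xi_1;\xi_2):=+\infty$. Interaction range: $R:=\inf\{R'>0: j(x)=0\text{ whenever }|x|\ge R'\}\in(0,+\infty]$. Boundary particles: if $R=\infty$, $\xi_{\partial\Lambda}:=\xi_{\Lambda^c}$. If $R<\infty$, $\xi_{\partial\Lambda}$ is the set of $x\in\xi_{\Lambda^c}$ for which there exist points $x_{j_1},\dots,x_{j_k}\in\xi_{\Lambda^c}$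 with $x_{j_k}=x$ and a point $x_{j_0}\in\Lambda$ such that $|x_{j_l}-x_{j_{l-1}}|<R$ for $l=1,\dots,k$. For bounded $\Delta$, $\widehat\xi_\Delta:=\xi_\Delta\cap\xi_{\partial\Lambda}$. Possible boundary conditions: $\mathcal{R}_\Lambda:=\{\xi\in\mathcal{N}:\det J(\widehat\xi_\Delta,\widehat\xi_\Delta)\neq0\text{ for all bounded }\Delta\subset\Lambda^c\}$. *)

From HB Require Import structures.
From mathcomp Require Import all_boot all_order all_algebra.
From mathcomp Require Import all_classical all_reals all_analysis.
From mathcomp Require Import complex.
Set Implicit Arguments. Unset Strict Implicit. Unset Printing Implicit Defensive.
Import Order.TTheory GRing.Theory Num.Theory.
Import numFieldNormedType.Exports.
Local Open Scope classical_set_scope.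
Local Open Scope ring_scope.

Section Defs.
Variables (R : realType) (d : nat).

Notation pt := 'rV[R]_d.
Notation C := (complex.complex R).

Definition dotRd (x t : pt) : R := \sum_(i < d) x 0 i * t 0 i.
Definition enorm (x : pt) : R := Num.sqrt (\sum_(i < d) x 0 i ^+ 2).

Definition borelRd := g_sigma_algebraType (@open pt).
Definition borel_set (A : set pt) : Prop := <<s (@open pt) >> A.

Definition jfun (rho : {measure set borelRd -> \bar R}) (x : pt) : C :=
  complex.Complex ((2 * pi) ^- d * Rintegral rho setT (fun t : borelRd => cos (dotRd x t)))
                  ((2 * pi) ^- d * Rintegral rho setT (fun t : borelRd => sin (dotRd x t))).

Definition cabs (z : C) : R := Num.sqrt (complex.Re z ^+ 2 + complex.Im z ^+ 2).

Definition int_range (j : pt -> C) : \bar R :=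
  ereal_inf [set r%:E | r in [set r : R | 0 < r /\ forall x, r <= enorm x -> j x = 0]].

Definition Jmx (j : pt -> C) (s : seq pt) : 'M[C]_(size s) :=
  \matrix_(i < size s, k < size s) j (nth 0 s i - nth 0 s k).

(* U^{(J)}(x_1..x_n) = - log det J, with -log 0 = +oo; U(empty) = 0 *)
Definition Upot (j : pt -> C) (s : seq pt) : \bar R :=
  let D := complex.Re (\det (Jmx j s)) in
  if 0 < D then (- ln D)%:E else +oo%E.

Definition Wpot (j : pt -> C) (s1 s2 : seq pt) : \bar R :=
  if (Upot j (s1 ++ s2) < +oo)%E
  then (Upot j (s1 ++ s2) - Upot j s1 - Upot j s2)%E else +oo%E.

(* A configuration in N: a multiplicity function with locally finite support *)
Definition supp (xi : pt -> nat) : set pt := [set x | (0 < xi x)%N].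
Definition locally_finite_config (xi : pt -> nat) : Prop :=
  forall B : set pt, bounded_set B -> finite_set (B `&` supp xi).

Definition boundary (j : pt -> C) (Lam : set pt) (xi : pt -> nat) : set pt :=
  if int_range j == +oo%E then supp xi `&` ~` Lam
  else [set x | exists (y0 : pt) (s : seq pt),
          [/\ Lam y0, s != [::], all (fun y => y \in supp xi `&` ~` Lam) s,
              last y0 s = x &
              path (fun a b : pt => ((enorm (b - a))%:E < int_range j)%E) y0 s]].

Definition hat_xi (j : pt -> C) (Lam : set pt) (xi : pt -> nat) (Del : set pt) : seq pt :=
  flatten [seq nseq (xi x) x | x <- finmap.enum_fset (fset_set (Del `&` boundary j Lam xi))].

Definition possible_bc (j : pt -> C) (Lam : set pt) (xi : pt -> nat) : Prop :=
  locally_finite_config xi /\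
  forall Del : set pt, bounded_set Del -> Del `<=` ~` Lam ->
    \det (Jmx j (hat_xi j Lam xi Del)) != 0.

Fixpoint iter_lebesgue (n : nat) : ('rV[R]_n -> \bar R) -> \bar R :=
  match n with
  | 0 => fun g => g 0
  | n'.+1 => fun g => (\int[@lebesgue_measure R]_x
                          iter_lebesgue (fun y : 'rV[R]_n' => g (row_mx (x%:M) y)))%E
  end.

Definition L1_Rd (j : pt -> C) : Prop :=
  (iter_lebesgue (fun x : pt => (cabs (j x))%:E) < +oo)%E.

(* filter of bounded Borel sets Delta \supset Lambda increasing to R^d *)
Definition exhaust_filter (Lam : set pt) : set_system (set pt) :=
  filter_from [set D0 | bounded_set D0 /\ borel_set D0 /\ Lam `<=` D0]
              (fun D0 => [set D | bounded_set D /\ borel_set D /\ D0 `<=` D]).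

End Defs.

From HB Require Import structures.
From mathcomp Require Import all_boot all_order all_algebra.
From mathcomp Require Import all_classical all_reals all_analysis.
From mathcomp Require Import complex.
From mathcomp Require Import ring.
From mathcomp Require Import fingroup perm.
From mathcomp Require Import measurable_realfun.
From mathcomp Require finmap.
Set Implicit Arguments. Unset Strict Implicit. Unset Printing Implicit Defensive.
Import Order.TTheory GRing.Theory Num.Theory.
Import numFieldNormedType.Exports.
Local Open Scope classical_set_scope.
Local Open Scope ring_scope.

(* The kernel K(x, y) = j(x - y) is Hermitian positive semidefinite, since
   sum_{i,k} conj(c_i) c_k j(x_i - x_k) = (2 pi)^-d \int |sum_i conj(c_i) e^{i x_i.t}|^2 drho(t).
   For such kernels the Schur complement of a nonsingular block is again a psd kernel, and
   det J(xs ++ s) / det J(xs) = det of the Schur complement on s.  Adding points to xs only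
   takes further Schur complements, and each of them can only decrease a psd determinant
   (Fischer's inequality det J(y :: s) <= j(0) det J(s)).  Hence
   U(zeta) + W(zeta; xs) = -log (det J(zeta ++ xs) / det J(xs)) is nondecreasing along the
   boundary configurations xs of Delta \ Lambda, so its limit is the supremum. *)

Section PsdKernel.
Variables (R : rcfType) (T : eqType) (x0 : T).
Local Notation C := R[i].
Implicit Types (K : T -> T -> C) (s : seq T) (c : nat -> C).

Definition kernel_mx K s : 'M[C]_(size s) :=
  \matrix_(i < size s, k < size s) K (nth x0 s i) (nth x0 s k).

Definition kernel_form K s c : C :=
  \sum_(i < size s) \sum_(k < size s) (c i)^* * c k * K (nth x0 s i) (nth x0 s k).

Definition hermitian_kernel K := forall a b, K b a = (K a b)^*.

Definition psd_kernel K := hermitian_kernel K /\ forall s c, 0 <= kernel_form K s c.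

Definition schur_kernel K z : T -> T -> C := fun a b => K a b - K a z * K z b / K z z.

Definition schur_seq K xs : T -> T -> C := foldl schur_kernel K xs.

Lemma det_kernel_mx_nil K : \det (kernel_mx K [::]) = 1.
Proof. exact: det_mx00. Qed.

Lemma det_kernel_mx_perm K s s' : perm_eq s s' ->
  \det (kernel_mx K s) = \det (kernel_mx K s').
Proof.
move=> ss'; have /tuple_permP [p Hp] : perm_eq s (in_tuple s') by [].
set n := size s' in p Hp *; set A := \matrix_(i < n, k < n) K (nth x0 s' i) (nth x0 s' k).
have -> : \det (kernel_mx K s) = \det (row_perm p (col_perm p A)).
  rewrite /kernel_mx Hp size_map size_enum_ord.
  by congr (\det _); apply/matrixP => i k; rewrite !mxE -!tnth_nth !tnth_mktuple !(tnth_nth x0).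
rewrite row_permE col_permE !det_mulmx !det_perm odd_permV mulrA mulrC mulrA.
by rewrite -signr_addb addbb mul1r.
Qed.

Lemma det_kernel_mx_cons K z s : K z z != 0 ->
  \det (kernel_mx K (z :: s)) = K z z * \det (kernel_mx (schur_kernel K z) s).
Proof.
move=> Kzz; set n := size s; set a := K z z.
pose r : 'M[C]_(1, n) := \row_k K z (nth x0 s k).
pose c : 'M[C]_(n, 1) := \col_i K (nth x0 s i) z.
have -> : (kernel_mx K (z :: s) : 'M[C]_(1 + n)) = block_mx a%:M r c (kernel_mx K s).
  rewrite -(submxK (kernel_mx K (z :: s) : 'M[C]_(1 + n))).
  congr block_mx; apply/matrixP => i j; rewrite !mxE //.
  - by rewrite !ord1.
  - by rewrite ord1.
  - by rewrite ord1.
pose L : 'M[C]_(1 + n) := block_mx 1%:M 0 (- a^-1 *: c) 1%:M.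
rewrite -[LHS]mul1r -(_ : \det L = 1); last by rewrite det_lblock !det1 mulr1.
rewrite -det_mulmx mulmx_block !mul1mx !mul0mx !addr0.
rewrite -scalemxAl mul_mx_scalar scalerA mulNr mulVf // scaleN1r addNr.
rewrite det_ublock det_scalar1; congr (_ * \det _).
by apply/matrixP => i j; rewrite !mxE big_ord1 !mxE /schur_kernel /a; field.
Qed.

Lemma psd_kernel_diag_ge0 K z : psd_kernel K -> 0 <= K z z.
Proof.
by move=> [_ /(_ [:: z] (fun _ => 1))]; rewrite /kernel_form !big_ord1 /= rmorph1 !mul1r.
Qed.

Lemma psd_kernel_diag_eq0 K z a : psd_kernel K -> K z z = 0 -> K z a = 0.
Proof.
move=> psdK Kzz; have [hermK formK] := psdK; apply/eqP/negPn/negP => w0.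
have w0' : (K z a)^* != 0 by rewrite conjC_eq0.
have Kaa_real : (K a a)^* = K a a by apply/geC0_conj/psd_kernel_diag_ge0.
pose g := - (K a a + 1) / (2 * (K z a)^*).
(* With this [g] the form on [[:: z; a]] at [(g, 1)] equals [-1]. *)
have := formK [:: z; a] (fun i => if i == 0%N then g else 1).
rewrite /kernel_form !big_ord_recr !big_ord0 /= !add0r Kzz [K a z]hermK rmorph1.
have -> : g^* = - (K a a + 1) / (2 * K z a).
  by rewrite /g rmorphM rmorphN fmorphV rmorphD rmorphM /= Kaa_real rmorph1 conjCK rmorph_nat.
suff -> : - (K a a + 1) / (2 * K z a) * g * 0 + - (K a a + 1) / (2 * K z a) * 1 * K z a +
   (1 * g * (K z a)^* + 1 * 1 * K a a) = -1 by rewrite oppr_ge0 ler10.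
by rewrite /g; field; rewrite w0 w0'.
Qed.

Lemma kernel_form_rcons K s z c b :
  kernel_form K (rcons s z) (fun i => if (i < size s)%N then c i else b) =
  kernel_form K s c + b * \sum_(i < size s) (c i)^* * K (nth x0 s i) z
    + b^* * \sum_(k < size s) c k * K z (nth x0 s k) + b^* * b * K z z.
Proof.
have nthE (i : 'I_(size s)) : nth x0 (rcons s z) i = nth x0 s i by rewrite nth_rcons ltn_ord.
have nthN : nth x0 (rcons s z) (size s) = z by rewrite nth_rcons ltnn eqxx.
rewrite /kernel_form size_rcons big_ord_recr /=.
under eq_bigr => i _ do rewrite big_ord_recr /=.
rewrite big_ord_recr /= ltnn nthN big_split /= !mulr_sumr.
rewrite addrA; congr (_ + _ + _ + _); apply: eq_bigr => i _; rewrite ltn_ord nthE //.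
- by apply: eq_bigr => k _; rewrite ltn_ord nthE.
- by rewrite mulrCA mulrA.
- by rewrite mulrA.
Qed.

Lemma hermitian_kernel_form_conj K s c :
  hermitian_kernel K -> (kernel_form K s c)^* = kernel_form K s c.
Proof.
move=> hermK; rewrite /kernel_form rmorph_sum exchange_big /=; apply: eq_bigr => i _.
rewrite rmorph_sum; apply: eq_bigr => k _.
by rewrite !rmorphM /= conjCK -hermK [c i * _]mulrC.
Qed.

Lemma kernel_form_schur K z s c :
  kernel_form (schur_kernel K z) s c = kernel_form K s c
    - (\sum_(i < size s) (c i)^* * K (nth x0 s i) z)
      * (\sum_(k < size s) c k * K z (nth x0 s k)) / K z z.
Proof.
rewrite mulr_suml mulr_suml /kernel_form -sumrB; apply: eq_bigr => i _.
rewrite mulr_sumr mulr_suml -sumrB; apply: eq_bigr => k _.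
by rewrite /schur_kernel; ring.
Qed.

Lemma schur_kernel_psd K z : psd_kernel K -> K z z != 0 -> psd_kernel (schur_kernel K z).
Proof.
move=> psdK Kzz; have [hermK formK] := psdK.
have Kzz_real : (K z z)^* = K z z by apply/geC0_conj/psd_kernel_diag_ge0.
split=> [a b | s c].
  rewrite /schur_kernel rmorphB rmorphM rmorphM fmorphV /= Kzz_real -!hermK.
  by rewrite [K z a * _]mulrC.
pose v := \sum_(i < size s) (c i)^* * K (nth x0 s i) z.
pose w := \sum_(k < size s) c k * K z (nth x0 s k).
have wv : w^* = v.
  by rewrite rmorph_sum; apply: eq_bigr => k _; rewrite rmorphM /= -hermK.
(* The Schur form at [c] is the [K]-form on [rcons s z] at [c] extended by [- w / K z z]. *)
have := formK (rcons s z) (fun i => if (i < size s)%N then c i else - w / K z z).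
rewrite kernel_form_rcons kernel_form_schur -/v -/w.
rewrite rmorphM rmorphN fmorphV /= wv Kzz_real.
suff -> : kernel_form K s c + - w / K z z * v + - v / K z z * w
    + - v / K z z * (- w / K z z) * K z z = kernel_form K s c - v * w / K z z by [].
by field.
Qed.

Lemma det_kernel_mx_diag_eq0 K z s : psd_kernel K -> K z z = 0 -> z \in s ->
  \det (kernel_mx K s) = 0.
Proof.
move=> psdK Kzz zs; have zi : (index z s < size s)%N by rewrite index_mem.
rewrite (expand_det_row _ (Ordinal zi)) big1 // => j _.
by rewrite mxE /= nth_index // (psd_kernel_diag_eq0 _ psdK Kzz) mul0r.
Qed.

Lemma det_kernel_mx_cons_neq0 K y s : psd_kernel K -> \det (kernel_mx K (y :: s)) != 0 ->
  K y y != 0 /\ \det (kernel_mx (schur_kernel K y) s) != 0.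
Proof.
move=> psdK det_neq0; have Kyy : K y y != 0.
  by apply: contra_neq det_neq0 => /(det_kernel_mx_diag_eq0 psdK)->; rewrite ?mem_head.
by move: det_neq0; rewrite det_kernel_mx_cons // mulf_eq0 negb_or => /andP[].
Qed.

Lemma det_kernel_mx_ge0 K s : psd_kernel K -> 0 <= \det (kernel_mx K s).
Proof.
elim: s K => [|z s IH] K psdK; first by rewrite det_kernel_mx_nil.
have [Kzz|Kzz] := eqVneq (K z z) 0.
  by rewrite (det_kernel_mx_diag_eq0 psdK Kzz) ?mem_head.
rewrite det_kernel_mx_cons // mulr_ge0 ?psd_kernel_diag_ge0 //.
exact/IH/schur_kernel_psd.
Qed.

Lemma det_kernel_mx_cons_le K y s : psd_kernel K ->
  \det (kernel_mx K (y :: s)) <= K y y * \det (kernel_mx K s).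
Proof.
elim: s K y => [|z s IH] K y psdK.
  by rewrite det_kernel_mx_nil mulr1 det_mx11 mxE.
have [Kzz|Kzz] := eqVneq (K z z) 0.
  by rewrite !(det_kernel_mx_diag_eq0 psdK Kzz) ?mulr0 // !inE eqxx ?orbT.
have psdS := schur_kernel_psd psdK Kzz.
have Kyy_ge : schur_kernel K z y y <= K y y.
  rewrite /schur_kernel lerBlDr lerDl [K z y](proj1 psdK) divr_ge0 ?mul_conjC_ge0 //.
  exact: psd_kernel_diag_ge0.
rewrite (@det_kernel_mx_perm K _ (z :: y :: s)); last exact/permPl/(perm_catCA [:: y] [:: z] s).
rewrite [X in X <= _]det_kernel_mx_cons // [X in _ <= _ * X]det_kernel_mx_cons //.
rewrite mulrCA ler_wpM2l ?psd_kernel_diag_ge0 //.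
apply: le_trans (IH _ y psdS) _.
by rewrite ler_wpM2r ?det_kernel_mx_ge0.
Qed.

Lemma det_schur_kernel_le K y s : psd_kernel K -> K y y != 0 ->
  \det (kernel_mx (schur_kernel K y) s) <= \det (kernel_mx K s).
Proof.
move=> psdK Kyy; have := det_kernel_mx_cons_le y s psdK.
by rewrite det_kernel_mx_cons // ler_pM2l // lt_def Kyy psd_kernel_diag_ge0.
Qed.

Lemma schur_seq_psd K xs : psd_kernel K -> \det (kernel_mx K xs) != 0 ->
  psd_kernel (schur_seq K xs).
Proof.
elim: xs K => [|y xs IH] K psdK // /(det_kernel_mx_cons_neq0 psdK) [Kyy det_neq0].
exact/IH/det_neq0/schur_kernel_psd.
Qed.

Lemma det_kernel_mx_cat K xs s : psd_kernel K -> \det (kernel_mx K xs) != 0 ->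
  \det (kernel_mx K (xs ++ s)) = \det (kernel_mx K xs) * \det (kernel_mx (schur_seq K xs) s).
Proof.
elim: xs K => [|y xs IH] K psdK; first by rewrite det_kernel_mx_nil mul1r.
move=> /[dup] /(det_kernel_mx_cons_neq0 psdK) [Kyy det_neq0] _.
by rewrite cat_cons !det_kernel_mx_cons // (IH _ (schur_kernel_psd psdK Kyy)) // mulrA.
Qed.

Lemma det_kernel_mx_cat_div K xs s : psd_kernel K -> \det (kernel_mx K xs) != 0 ->
  \det (kernel_mx K (xs ++ s)) / \det (kernel_mx K xs) = \det (kernel_mx (schur_seq K xs) s).
Proof. by move=> psdK det_xs; rewrite det_kernel_mx_cat // mulrC mulKf. Qed.

Lemma det_schur_seq_le K xs s : psd_kernel K -> \det (kernel_mx K xs) != 0 ->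
  \det (kernel_mx (schur_seq K xs) s) <= \det (kernel_mx K s).
Proof.
elim: xs K => [|y xs IH] K psdK // /(det_kernel_mx_cons_neq0 psdK) [Kyy det_neq0].
apply: le_trans (IH _ (schur_kernel_psd psdK Kyy) det_neq0) _.
exact: det_schur_kernel_le.
Qed.

Lemma det_kernel_mx_ratio_le K s xs eta xs' : psd_kernel K ->
  perm_eq xs' (xs ++ eta) -> \det (kernel_mx K xs) != 0 -> \det (kernel_mx K xs') != 0 ->
  \det (kernel_mx K (s ++ xs')) / \det (kernel_mx K xs')
    <= \det (kernel_mx K (s ++ xs)) / \det (kernel_mx K xs).
Proof.
move=> psdK perm_xs' det_xs det_xs'.
have catC u : \det (kernel_mx K (s ++ u)) = \det (kernel_mx K (u ++ s)).
  by apply: det_kernel_mx_perm; rewrite perm_catC.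
rewrite !catC (det_kernel_mx_perm K perm_xs').
rewrite (det_kernel_mx_perm K (perm_cat perm_xs' (perm_refl s))).
rewrite (det_kernel_mx_perm K perm_xs') in det_xs'.
rewrite !det_kernel_mx_cat_div // /schur_seq foldl_cat.
apply: det_schur_seq_le; first exact: schur_seq_psd.
by move: det_xs'; rewrite det_kernel_mx_cat // mulf_eq0 negb_or => /andP[].
Qed.

End PsdKernel.

Lemma Re_sum (R : rcfType) (I : Type) (r : seq I) (F : I -> R[i]) :
  complex.Re (\sum_(i <- r) F i) = \sum_(i <- r) complex.Re (F i).
Proof. exact: (raddf_sum (@complex.Re R : Rcomplex R -> R)). Qed.

Lemma ReM (R : rcfType) (x : R[i]) (a b : R) :
  complex.Re (x * complex.Complex a b) = complex.Re x * a - complex.Im x * b.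
Proof. by case: x. Qed.

Lemma cis_form_ge0 (R : realType) n (u : nat -> R) (c : nat -> R[i]) :
  0 <= \sum_(i < n) \sum_(k < n) (complex.Re ((c i)^* * c k) * cos (u i - u k)
                                 - complex.Im ((c i)^* * c k) * sin (u i - u k)).
Proof.
pose e i := complex.Complex (cos (u i)) (sin (u i)).
pose w := \sum_(i < n) (c i)^* * e i.
suff -> : \sum_(i < n) \sum_(k < n) (complex.Re ((c i)^* * c k) * cos (u i - u k)
    - complex.Im ((c i)^* * c k) * sin (u i - u k)) = complex.Re (w * w^*).
  by move: (mul_conjC_ge0 w); rewrite lecE => /andP[].
rewrite rmorph_sum mulr_suml Re_sum; apply: eq_bigr => i _.
rewrite mulr_sumr Re_sum; apply: eq_bigr => k _.
have cis_diff : e i * (e k)^* = complex.Complex (cos (u i - u k)) (sin (u i - u k)).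
  by rewrite cosB sinB /e /=; congr complex.Complex; ring.
by rewrite rmorphM /= conjCK -ReM -cis_diff; congr complex.Re; ring.
Qed.

Section FiniteSumIntegrals.
Context d' (T : measurableType d') (R : realType).
Implicit Types (mu : {measure set T -> \bar R}).

Lemma bounded_measurable_integrable (mu : {finite_measure set T -> \bar R})
    (f : T -> R) M :
  measurable_fun setT f -> (forall t, `|f t| <= M) -> mu.-integrable setT (EFin \o f).
Proof.
move=> mf fM; apply: measurable_bounded_integrable => //.
  by rewrite -ge0_fin_numE ?measure_ge0 // fin_num_measure.
exists M; split; first by rewrite num_real.
by move=> N MN t _; apply: le_trans (fM t) (ltW MN).
Qed.

Lemma integrable_fsum mu (I : Type) (r : seq I) (F : I -> T -> R) :
  (forall i, mu.-integrable setT (EFin \o F i)) ->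
  mu.-integrable setT (EFin \o (fun t => \sum_(i <- r) F i t)).
Proof.
move=> intF.
have -> : EFin \o (fun t => \sum_(i <- r) F i t) = fun t => \sum_(i <- r) (F i t)%:E.
  by apply/funext => t; rewrite sumEFin.
by apply: integrable_sum => // i _; exact: intF.
Qed.

Lemma Rintegral_fsum mu (I : Type) (r : seq I) (F : I -> T -> R) :
  (forall i, mu.-integrable setT (EFin \o F i)) ->
  Rintegral mu setT (fun t => \sum_(i <- r) F i t) = \sum_(i <- r) Rintegral mu setT (F i).
Proof.
move=> intF; elim: r => [|i r IH].
  by under eq_fun do rewrite big_nil; rewrite big_nil /Rintegral integral0.
under eq_fun do rewrite big_cons; rewrite big_cons RintegralD //.
  by rewrite IH.
exact: integrable_fsum.
Qed.

End FiniteSumIntegrals.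

Section FourierKernel.
Variables (R : realType) (d : nat) (rho : {finite_measure set borelRd R d -> \bar R}).
Local Notation pt := 'rV[R]_d.
Local Notation BT := (borelRd R d).

Lemma continuous_borelRd_measurable (g : pt -> R) : continuous g ->
  measurable_fun setT (g : BT -> R).
Proof.
move=> cg; apply: (measurability _ (RGenOpens.measurableE R)).
move=> _ [_ [a [b ->]] <-]; apply: sub_sigma_algebra.
by rewrite setTI; apply: (continuousP g).1 => //; exact: interval_open.
Qed.

Lemma measurable_dotRd x : measurable_fun setT (fun t : BT => dotRd x t).
Proof.
rewrite /dotRd; apply: measurable_sum => i.
apply: measurable_funM; first exact: measurable_cst.
by apply: continuous_borelRd_measurable; exact: coord_continuous.
Qed.

Lemma integrable_comp_dotRd (g : R -> R) M x : continuous g -> (forall u, `|g u| <= M) ->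
  rho.-integrable setT (EFin \o (fun t : BT => g (dotRd x t))).
Proof.
move=> cg gM; apply: (bounded_measurable_integrable rho (M := M)) => //.
exact: measurableT_comp (continuous_measurable_fun cg) (measurable_dotRd x).
Qed.

Lemma continuous_trig (a b : R) : continuous (fun u : R => a * cos u - b * sin u).
Proof.
move=> u; apply: cvgB; apply: cvgM;
  [exact: cvg_cst|exact: continuous_cos|exact: cvg_cst|exact: continuous_sin].
Qed.

Lemma integrable_trig_dotRd a b x :
  rho.-integrable setT (EFin \o (fun t : BT => a * cos (dotRd x t) - b * sin (dotRd x t))).
Proof.
have trig_bound u : `|a * cos u - b * sin u| <= `|a| + `|b|.
  apply: le_trans (ler_normB _ _) _; rewrite !normrM.
  by apply: lerD; rewrite ler_piMr // ?cos_max ?sin_max.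
exact: integrable_comp_dotRd x (@continuous_trig a b) trig_bound.
Qed.

Lemma Rintegral_trig_dotRd a b x :
  Rintegral rho setT (fun t : BT => a * cos (dotRd x t) - b * sin (dotRd x t)) =
  a * Rintegral rho setT (fun t : BT => cos (dotRd x t))
  - b * Rintegral rho setT (fun t : BT => sin (dotRd x t)).
Proof.
have int_cos : rho.-integrable setT (EFin \o (fun t : BT => cos (dotRd x t))).
  exact: integrable_comp_dotRd x (@continuous_cos R) (@cos_max R).
have int_sin : rho.-integrable setT (EFin \o (fun t : BT => sin (dotRd x t))).
  exact: integrable_comp_dotRd x (@continuous_sin R) (@sin_max R).
rewrite RintegralB //; last 2 first.
- exact: integrableZl int_cos.
- exact: integrableZl int_sin.
by rewrite !RintegralZl.
Qed.

Lemma dotRdN (x t : pt) : dotRd (- x) t = - dotRd x t.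
Proof. by rewrite /dotRd -sumrN; apply: eq_bigr => i _; rewrite mxE mulNr. Qed.

Lemma dotRdB (x y t : pt) : dotRd (x - y) t = dotRd x t - dotRd y t.
Proof. by rewrite /dotRd -sumrB; apply: eq_bigr => i _; rewrite !mxE mulrBl. Qed.

Lemma jfunN (x : pt) : jfun rho (- x) = (jfun rho x)^*.
Proof.
have int_sin : rho.-integrable setT (EFin \o (fun t : BT => sin (dotRd x t))).
  exact: integrable_comp_dotRd x (@continuous_sin R) (@sin_max R).
have cos_even : Rintegral rho setT (fun t : BT => cos (dotRd (- x) t)) =
    Rintegral rho setT (fun t : BT => cos (dotRd x t)).
  by apply: eq_Rintegral => t _; rewrite dotRdN cosN.
have sin_odd : Rintegral rho setT (fun t : BT => sin (dotRd (- x) t)) =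
    - Rintegral rho setT (fun t : BT => sin (dotRd x t)).
  rewrite -mulN1r -RintegralZl //.
  by apply: eq_Rintegral => t _; rewrite dotRdN sinN mulN1r.
by rewrite /jfun cos_even sin_odd mulrN.
Qed.

Lemma jfun_hermitian : hermitian_kernel (fun a b : pt => jfun rho (a - b)).
Proof. by move=> a b; rewrite -opprB jfunN. Qed.

Lemma jfun_psd_kernel : psd_kernel 0 (fun a b : pt => jfun rho (a - b)).
Proof.
split=> [|s c]; first exact: jfun_hermitian.
rewrite lecE; apply/andP; split.
  move: (hermitian_kernel_form_conj 0 s c jfun_hermitian).
  case: (kernel_form _ _ s c) => a b /= [] /eqP.
  by rewrite eq_sym -subr_eq0 opprK -mulr2n mulrn_eq0.
pose kap : R := (2 * pi) ^- d.
pose G i k (t : BT) := complex.Re ((c i)^* * c k) * cos (dotRd (nth 0 s i - nth 0 s k) t)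
  - complex.Im ((c i)^* * c k) * sin (dotRd (nth 0 s i - nth 0 s k) t).
have intG i k : rho.-integrable setT (EFin \o G i k) by exact: integrable_trig_dotRd.
have -> : complex.Re (kernel_form 0 (fun a b => jfun rho (a - b)) s c) =
    kap * Rintegral rho setT (fun t => \sum_(i < size s) \sum_(k < size s) G i k t).
  rewrite Rintegral_fsum => [|i]; last exact: integrable_fsum.
  rewrite /kernel_form Re_sum mulr_sumr; apply: eq_bigr => i _.
  rewrite Re_sum Rintegral_fsum // mulr_sumr; apply: eq_bigr => k _.
  by rewrite ReM Rintegral_trig_dotRd /kap; ring.
apply: mulr_ge0; first by rewrite invr_ge0 exprn_ge0 // mulr_ge0 // pi_ge0.
apply: Rintegral_ge0 => t _; rewrite /G.
under eq_bigr => i _ do under eq_bigr => k _ do rewrite dotRdB.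
exact: (@cis_form_ge0 R (size s) (fun i => dotRd (nth 0 s i) t) c).
Qed.

End FourierKernel.

Lemma perm_flatten_map_subset (T U : eqType) (f : T -> seq U) (s s' : seq T) :
  uniq s -> uniq s' -> {subset s <= s'} ->
  perm_eq (flatten (map f s'))
    (flatten (map f s) ++ flatten (map f [seq x <- s' | x \notin s])).
Proof.
move=> uniq_s uniq_s' ss'.
have split_s' : perm_eq s' ([seq x <- s' | x \in s] ++ [seq x <- s' | x \notin s]).
  by rewrite perm_sym; apply/permPl; exact: perm_filterC.
have filter_s : perm_eq [seq x <- s' | x \in s] s.
  apply: uniq_perm => //; first exact: filter_uniq.
  by move=> x; rewrite mem_filter; case: (boolP (x \in s)) => // /ss' ->.
apply: perm_trans (perm_flatten (perm_map f split_s')) _.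
by rewrite map_cat flatten_cat perm_cat2r; apply/perm_flatten/perm_map.
Qed.

Section Configurations.
Variables (R : realType) (d : nat).
Local Notation pt := 'rV[R]_d.
Implicit Types (A B D Lam : set pt).

Lemma bounded_setS A B : A `<=` B -> bounded_set B -> bounded_set A.
Proof. by move=> AB /= bB; apply: filterS bB => M MB x /AB /MB. Qed.

Lemma boundary_sub_supp (j : pt -> R[i]) Lam xi : boundary j Lam xi `<=` supp xi.
Proof.
move=> x; rewrite /boundary; case: ifP => _; first by case.
move=> [y0 [[|y s] [_ // _ /allP all_s <- _]]].
by have := all_s _ (mem_last y s); rewrite in_setE => -[].
Qed.

Lemma hat_xi_perm_cat (j : pt -> R[i]) Lam xi D D' : locally_finite_config xi ->
  bounded_set D' -> D `<=` D' ->
  exists eta, perm_eq (hat_xi j Lam xi D') (hat_xi j Lam xi D ++ eta).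
Proof.
move=> lf_xi bD' DD'.
have fin_bd A : A `<=` D' -> finite_set (A `&` boundary j Lam xi).
  move=> AD'; apply: sub_finite_set (lf_xi _ (bounded_setS AD' bD')).
  by move=> x [Ax /boundary_sub_supp]; split.
have finD := fin_bd D DD'; have finD' := fin_bd D' (@subset_refl _ D').
eexists; apply: perm_flatten_map_subset; rewrite ?finmap.fset_uniq // => x.
by rewrite !in_fset_set // !in_setE => -[/DD' D'x bx].
Qed.

End Configurations.

Section Energy.
Variables (R : realType) (d : nat) (rho : {finite_measure set borelRd R d -> \bar R}).
Local Notation pt := 'rV[R]_d.
Local Notation j := (jfun rho).
Local Notation K := (fun a b : pt => jfun rho (a - b)).
Local Notation detK s := (\det (kernel_mx 0 K s)).
Local Notation detJ s := (complex.Re (detK s)).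
Implicit Types (s zeta xs : seq pt).

Definition neglog (x : R) : \bar R := if 0 < x then (- ln x)%:E else +oo%E.

Lemma neglog_neqNy x : neglog x != -oo%E.
Proof. by rewrite /neglog; case: ifP. Qed.

Lemma neglog_le x y : 0 <= y -> y <= x -> (neglog x <= neglog y)%E.
Proof.
rewrite /neglog => y_ge0 yx; case: (ifPn (0 < y)) => y_gt0; last by rewrite leey.
by rewrite (lt_le_trans y_gt0 yx) lee_fin lerN2 ler_ln // posrE (lt_le_trans y_gt0 yx).
Qed.

Lemma Jmx_kernel_mx s : Jmx j s = kernel_mx 0 (fun a b => j (a - b)) s.
Proof. by []. Qed.

Lemma Upot_neglog s : Upot j s = neglog (detJ s).
Proof. by []. Qed.

Lemma det_jfun_kernelE s : detK s = (detJ s)%:C%C /\ 0 <= detJ s.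
Proof.
have := det_kernel_mx_ge0 s (jfun_psd_kernel rho).
by case: (detK s) => a b; rewrite lecE /= => /andP[/eqP -> a_ge0]; split.
Qed.

Lemma Re_det_jfun_kernel_ratio_le zeta xs eta xs' : perm_eq xs' (xs ++ eta) ->
  detK xs != 0 -> detK xs' != 0 ->
  detJ (zeta ++ xs') / detJ xs' <= detJ (zeta ++ xs) / detJ xs.
Proof.
move=> perm_xs' det_xs det_xs'.
have := det_kernel_mx_ratio_le zeta (jfun_psd_kernel rho) perm_xs' det_xs det_xs'.
have realE u := (det_jfun_kernelE u).1.
rewrite (realE (zeta ++ xs')) (realE xs') (realE (zeta ++ xs)) (realE xs).
by rewrite -!fmorph_div lecR.
Qed.

Lemma Upot_add_Wpot zeta xs : detK xs != 0 ->
  (Upot j zeta + Wpot j zeta xs = neglog (detJ (zeta ++ xs) / detJ xs))%E.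
Proof.
move=> det_xs; have xs_gt0 : 0 < detJ xs.
  rewrite lt_def (det_jfun_kernelE xs).2 andbT; apply: contra_neq det_xs => xs0.
  by rewrite (det_jfun_kernelE xs).1 xs0.
have fischer : detJ (zeta ++ xs) / detJ xs <= detJ zeta.
  have det_nil : detK [::] != 0 by rewrite det_kernel_mx_nil oner_eq0.
  have := @Re_det_jfun_kernel_ratio_le zeta [::] xs xs (perm_refl xs) det_nil det_xs.
  by rewrite cats0 det_kernel_mx_nil divr1.
rewrite /Wpot !Upot_neglog.
have [zx_gt0|] := ltP 0 (detJ (zeta ++ xs)); last first.
  rewrite le_eqVlt ltNge (det_jfun_kernelE _).2 orbF => /eqP ->.
  by rewrite mul0r /neglog ltxx /= addey ?neglog_neqNy.
have ratio_gt0 : 0 < detJ (zeta ++ xs) / detJ xs by exact: divr_gt0.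
have zeta_gt0 : 0 < detJ zeta by exact: lt_le_trans fischer.
rewrite /neglog zx_gt0 zeta_gt0 xs_gt0 ratio_gt0 ltry -!EFinB -EFinD; congr EFin.
by rewrite ln_div ?posrE //; ring.
Qed.

Lemma Upot_add_Wpot_hat_le Lam xi zeta D D' : possible_bc j Lam xi ->
  bounded_set D' -> D `<=` D' -> D' `<=` ~` Lam ->
  (Upot j zeta + Wpot j zeta (hat_xi j Lam xi D)
    <= Upot j zeta + Wpot j zeta (hat_xi j Lam xi D'))%E.
Proof.
move=> [lf_xi det_hat] bD' DD' D'Lam.
have det_hat_neq0 A : bounded_set A -> A `<=` ~` Lam -> detK (hat_xi j Lam xi A) != 0.
  by move=> bA ALam; rewrite -Jmx_kernel_mx; exact: det_hat.
have det_D := det_hat_neq0 D (bounded_setS DD' bD') (subset_trans DD' D'Lam).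
have det_D' := det_hat_neq0 D' bD' D'Lam.
have [eta perm_eta] := hat_xi_perm_cat j Lam lf_xi bD' DD'.
rewrite !Upot_add_Wpot //; apply: neglog_le.
  by rewrite divr_ge0 ?(det_jfun_kernelE _).2.
exact: (Re_det_jfun_kernel_ratio_le zeta perm_eta det_D det_D').
Qed.

Lemma Upot_add_Wpot_hat_neqNy Lam xi zeta D : possible_bc j Lam xi ->
  bounded_set D -> D `<=` ~` Lam ->
  (Upot j zeta + Wpot j zeta (hat_xi j Lam xi D))%E != -oo%E.
Proof.
move=> [_ det_hat] bD DLam; rewrite Upot_add_Wpot ?neglog_neqNy //.
by rewrite -Jmx_kernel_mx; exact: det_hat.
Qed.

End Energy.

Lemma cvg_ereal_sup_eventually_ge (R : realType) (T : Type) (F : set_system T)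
    (FF : Filter F) (S : set T) (f : T -> \bar R) :
  (\forall x \near F, S x) -> (forall y, S y -> \forall x \near F, (f y <= f x)%E) ->
  f @ F --> ereal_sup (f @` S).
Proof.
move=> FS Fge; set l := ereal_sup _.
have Fub : \forall x \near F, (f x <= l)%E.
  by apply: filterS FS => x Sx; apply: ereal_sup_ubound; exists x.
have Fgt y : (y < l)%E -> \forall x \near F, (y < f x)%E.
  move=> /ereal_sup_gt [_ [z Sz <-] yfz].
  by apply: filterS (Fge z Sz) => x; exact: lt_le_trans yfz.
move: Fub Fgt; case: l => [r| |] Fub Fgt P /=.
- move=> /nbhs_normP [e e0 he].
  have re : ((r - e)%:E < r%:E)%E by rewrite lte_fin gtrDl oppr_lt0.
  apply: filterS2 Fub (Fgt _ re) => x /=; case: (f x) => [v| |] //=.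
  rewrite lee_fin lte_fin => vr rv.
  by apply: he; rewrite /ball_ /= ger0_norm ?subr_ge0 // ltrBlDr -ltrBlDl.
- by move=> [M [_ hM]]; apply: filterS (Fgt M%:E (ltry M)) => x; exact: hM.
- move=> [M [_ hM]]; apply: filterS Fub => x /=; rewrite leeNy_eq => /eqP ->.
  exact/hM/ltNyr.
Qed.

Section Exhaustion.
Variables (R : realType) (d : nat).
Local Notation pt := 'rV[R]_d.
Implicit Types (A B D Lam : set pt).

Lemma bounded_setU A B : bounded_set A -> bounded_set B -> bounded_set (A `|` B).
Proof. by move=> /= bA bB; apply: filterS (filterI bA bB) => M [MA MB] x [/MA|/MB]. Qed.

Lemma borel_setU A B : borel_set A -> borel_set B -> borel_set (A `|` B).
Proof. exact: (@measurableU _ (borelRd R d)). Qed.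

Definition exhausting Lam : set (set pt) :=
  [set D | bounded_set D /\ borel_set D /\ Lam `<=` D].

Lemma exhaust_filter_filter Lam : bounded_set Lam -> borel_set Lam ->
  Filter (exhaust_filter Lam).
Proof.
move=> bLam borelLam; apply: filter_from_filter; first by exists Lam; split => //; split.
move=> D1 D2 [b1 [borel1 LD1]] [b2 [borel2 _]]; exists (D1 `|` D2).
  split; first exact: bounded_setU.
  by split; [exact: borel_setU | exact: subset_trans LD1 (@subsetUl _ _ _)].
move=> D [bD [borelD D12]]; split; split => //; split => //.
- exact: subset_trans (@subsetUl _ _ _) D12.
- exact: subset_trans (@subsetUr _ _ _) D12.
Qed.

End Exhaustion.

Theorem lemma3p2 (R : realType) (d : nat)
  (rho : {finite_measure set borelRd R d -> \bar R})
  (Lam : set 'rV[R]_d) (zeta : seq 'rV[R]_d) (xi : 'rV[R]_d -> nat) :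
  (0 < d)%N ->
  L1_Rd (jfun rho) ->
  bounded_set Lam -> borel_set Lam ->
  uniq zeta -> {subset zeta <= Lam} ->
  possible_bc (jfun rho) Lam xi ->
  exists L : \bar R, L != -oo%E /\
    ((fun Del => (Upot (jfun rho) zeta
                  + Wpot (jfun rho) zeta (hat_xi (jfun rho) Lam xi (Del `\` Lam)))%E)
       @ exhaust_filter Lam --> L).
Proof.
move=> _ _ bLam borelLam _ _ bc_xi.
set f := (fun Del : set 'rV[R]_d => _).
have f_neqNy D : bounded_set D -> f D != -oo%E.
  move=> bD; apply: (Upot_add_Wpot_hat_neqNy zeta bc_xi) => [|x []//].
  by apply: bounded_setS bD => x [].
have f_le D D' : exhausting Lam D' -> D `<=` D' -> (f D <= f D')%E.
  move=> [bD' _] DD'; apply: (Upot_add_Wpot_hat_le zeta bc_xi) => [|x [/DD']|x []//] //.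
  by apply: bounded_setS bD' => x [].
have SLam : exhausting Lam Lam by split => //; split.
exists (ereal_sup (f @` exhausting Lam)); split.
  have : (f Lam <= ereal_sup (f @` exhausting Lam))%E by apply: ereal_sup_ubound; exists Lam.
  by apply: contraTN => /eqP ->; rewrite leeNy_eq; exact: f_neqNy.
apply: (cvg_ereal_sup_eventually_ge (exhaust_filter_filter bLam borelLam)).
  by exists Lam.
move=> D SD; exists D => // D' [bD' [borelD' DD']].
by apply: f_le => //; split => //; split => //; apply: subset_trans DD'; case: SD => _ [].
Qed.
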